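(* Let $n\ge 3$ and let $q$ be a real number with $0<q\le 1/6$. Consider the Markov chain on $\{0,1,\dots,n-1\}$ with $n\times n$ transition probability matrix $\mathbf P(q)=(P_{ij})$ given by: $P_{00}=1-q$, $P_{01}=q$; $P_{10}=5q$, $P_{11}=1-6q$, $P_{12}=q$; for $2\le i\le n-2$: $P_{i0}=4q$, $P_{i,i-1}=q$, $P_{ii}=1-6q$, $P_{i,i+1}=q$; $P_{n-1,0}=2q$, $P_{n-1,n-2}=q$, $P_{n-1,n-1}=1-3q$; all other entries $0$. Then the steady state probability vector $\vec\pi=(\pi_0,\dots,\pi_{n-1})$ (the unique probability vector with $\vec\pi=\vec\pi\mathbf P(q)$) is given by $$\pi_i=\frac{C_{n-1-i}}{\sum_{l=0}^{n-1}C_l},\qquad i=0,1,\dots,n-1.$$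
   Context: The Lucas-balancing numbers $C_m$ are defined by $C_0=1$, $C_1=3$, $C_{m+1}=6C_m-C_{m-1}$ (equivalently $C_m=\sqrt{8B_m^2+1}$ with $B_m$ the balancing numbers $B_0=0,B_1=1,B_{m+1}=6B_m-B_{m-1}$). *)

From HB Require Import structures.
From mathcomp Require Import all_boot all_order all_algebra.
Set Implicit Arguments. Unset Strict Implicit. Unset Printing Implicit Defensive.
Import Order.TTheory GRing.Theory Num.Theory.
Local Open Scope ring_scope.

(* Lucas-balancing numbers: C_0 = 1, C_1 = 3, C_{m+1} = 6 C_m - C_{m-1},
   computed in R via the pair (C_m, C_{m+1}). *)
Fixpoint lucas_bal_pair (R : ringType) (m : nat) : R * R :=
  match m with
  | 0%N => (1, 3%:R)
  | m'.+1 => let p := lucas_bal_pair R m' in (p.2, 6%:R * p.2 - p.1)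
  end.

Definition lucas_bal (R : ringType) (m : nat) : R := (lucas_bal_pair R m).1.

Definition Pentry (R : ringType) (n : nat) (q : R) (i j : nat) : R :=
  if i == 0%N then
    (if j == 0%N then 1 - q else if j == 1%N then q else 0)
  else if i == 1%N then
    (if j == 0%N then 5%:R * q else if j == 1%N then 1 - 6%:R * q
     else if j == 2%N then q else 0)
  else if i == n.-1 then
    (if j == 0%N then 2%:R * q else if j == n.-2 then q
     else if j == n.-1 then 1 - 3%:R * q else 0)
  else
    (if j == 0%N then 4%:R * q else if j == i.-1 then q
     else if j == i then 1 - 6%:R * q else if j == i.+1 then q else 0).

Definition Pmat (R : ringType) (n : nat) (q : R) : 'M[R]_n :=
  \matrix_(i < n, j < n) Pentry n q i j.

Definition prob_vector (R : numDomainType) (n : nat) (pi : 'rV[R]_n) : Prop :=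
  (forall j, 0 <= pi 0 j) /\ \sum_(j < n) pi 0 j = 1.

Definition stationary (R : ringType) (n : nat) (P : 'M[R]_n) (pi : 'rV[R]_n) : Prop :=
  pi = pi *m P.

From HB Require Import structures.
From mathcomp Require Import all_boot all_order all_algebra.
From mathcomp Require Import zify ring lra.
Import Order.TTheory GRing.Theory Num.Theory.
Local Open Scope ring_scope.

(* P(q) = 1 + q Q for a matrix Q independent of q, so for q <> 0 the stationary
   vectors are the left null vectors of Q.  Read from the last state backwards,
   the columns n-1, ..., 1 of pi Q = 0 are exactly the Lucas-balancing
   recurrence x_1 = 3 x_0, x_(m+2) = 6 x_(m+1) - x_m, so the null space is
   spanned by (C_(n-1-i))_i; column 0 then holds because
   4 (C_0 + ... + C_m) = C_(m+1) - C_m + 2.  Normalising gives the formula. *)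

Section LucasBalancing.
Variable R : comNzRingType.
Local Notation C := (lucas_bal R).

Lemma lucas_bal0 : C 0 = 1. Proof. by []. Qed.
Lemma lucas_bal1 : C 1 = 3%:R. Proof. by []. Qed.
Lemma lucas_balSS m : C m.+2 = 6%:R * C m.+1 - C m. Proof. by []. Qed.

Lemma lucas_bal_sum m : 4%:R * \sum_(l < m.+1) C l = C m.+1 - C m + 2%:R.
Proof.
elim: m => [|m IH]; first by rewrite big_ord1 lucas_bal0 lucas_bal1; ring.
by rewrite big_ord_recr mulrDr IH lucas_balSS; ring.
Qed.

Lemma lucas_bal_solution (N : nat) (x : nat -> R) :
  x 1%N - 3%:R * x 0%N = 0 ->
  (forall m, (m.+2 <= N)%N -> x m.+2 - 6%:R * x m.+1 + x m = 0) ->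
  forall m, (m <= N)%N -> x m = C m * x 0%N.
Proof.
move=> x1 xSS; elim/ltn_ind => -[|[|m]] IH le_m_N.
- by rewrite lucas_bal0 mul1r.
- by rewrite -[x 1%N]subr0 -x1 lucas_bal1; ring.
rewrite -[x m.+2]subr0 -(xSS m le_m_N) (IH m) ?(IH m.+1) ?lucas_balSS; [ring | lia..].
Qed.

End LucasBalancing.

Lemma lucas_bal_gt0 (R : realDomainType) m : 0 < lucas_bal R m.
Proof.
suff: 0 < lucas_bal R m <= lucas_bal R m.+1 by case/andP.
elim: m => [|m /andP[C_gt0 C_le]].
  by rewrite lucas_bal0 lucas_bal1; apply/andP; split; lra.
by rewrite lucas_balSS; apply/andP; split; lra.
Qed.

Lemma sum_mul_delta (R : nzRingType) n (x : 'I_n.+1 -> R) (a : nat) : (a < n.+1)%N ->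
  \sum_(i < n.+1) x i * (i == a :> nat)%:R = x (inord a).
Proof.
move=> lt_a_n; rewrite (bigD1 (inord a)) //= inordK // eqxx mulr1 big1 ?addr0 //.
move=> i neq_i_a; rewrite (_ : (i == a :> nat) = false) ?mulr0 //.
by apply: contraNF neq_i_a => /eqP eq_i_a; apply/eqP/val_inj; rewrite /= inordK.
Qed.

Section Generator.
Variables (R : comNzRingType) (k : nat).
Local Notation n := k.+3.

Definition Qentry (i j : nat) : R := Pentry n 1 i j - (i == j)%:R.
Definition Qmat : 'M[R]_n := \matrix_(i < n, j < n) Qentry i j.

Lemma Pmat_affine (q : R) : Pmat n q = 1 + q *: Qmat.
Proof.
apply/matrixP => i j; rewrite !mxE -val_eqE /Qentry /Pentry /=.
have := ltn_ord i; have := ltn_ord j => ??.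
by repeat case: eqP => /= ? //; try lia; ring.
Qed.

Lemma mul_Qentry_col0 (x : R) (i : 'I_n) :
  x * Qentry i 0 = 4%:R * x - 5%:R * (x * (i == 0 :> nat)%:R)
                   + x * (i == 1 :> nat)%:R - 2%:R * (x * (i == k.+2 :> nat)%:R).
Proof.
rewrite /Qentry /Pentry; have := ltn_ord i => ?.
by repeat case: eqP => /= ? //; try lia; ring.
Qed.

Lemma mul_Qentry_col_mid (x : R) (i : 'I_n) j : (0 < j < k.+2)%N ->
  x * Qentry i j = x * (i == j.-1 :> nat)%:R - 6%:R * (x * (i == j :> nat)%:R)
                   + x * (i == j.+1 :> nat)%:R.
Proof.
rewrite /Qentry /Pentry; have := ltn_ord i => ??.
by repeat case: eqP => /= ? //; try lia; ring.
Qed.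

Lemma mul_Qentry_col_last (x : R) (i : 'I_n) :
  x * Qentry i k.+2 = x * (i == k.+1 :> nat)%:R - 3%:R * (x * (i == k.+2 :> nat)%:R).
Proof.
rewrite /Qentry /Pentry; have := ltn_ord i => ?.
by repeat case: eqP => /= ? //; try lia; ring.
Qed.

Lemma mulmx_Qmat_col0 (pi : 'rV[R]_n) :
  (pi *m Qmat) 0 (inord 0) = 4%:R * \sum_(i < n) pi 0 i - 5%:R * pi 0 (inord 0)
                             + pi 0 (inord 1) - 2%:R * pi 0 (inord k.+2).
Proof.
rewrite mxE; under eq_bigr => i _ do rewrite mxE inordK // mul_Qentry_col0.
by rewrite !(big_split, sumrN) /= -!mulr_sumr !sum_mul_delta.
Qed.

Lemma mulmx_Qmat_col_mid (pi : 'rV[R]_n) j : (0 < j < k.+2)%N ->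
  (pi *m Qmat) 0 (inord j) =
    pi 0 (inord j.-1) - 6%:R * pi 0 (inord j) + pi 0 (inord j.+1).
Proof.
move=> j_mid; have lt_j_n : (j < n)%N by lia.
rewrite mxE; under eq_bigr => i _ do rewrite mxE inordK // mul_Qentry_col_mid //.
by rewrite !(big_split, sumrN) /= -!mulr_sumr !sum_mul_delta //; lia.
Qed.

Lemma mulmx_Qmat_col_last (pi : 'rV[R]_n) :
  (pi *m Qmat) 0 (inord k.+2) = pi 0 (inord k.+1) - 3%:R * pi 0 (inord k.+2).
Proof.
rewrite mxE; under eq_bigr => i _ do rewrite mxE inordK // mul_Qentry_col_last.
by rewrite !(big_split, sumrN) /= -!mulr_sumr !sum_mul_delta.
Qed.

Definition lucas_row : 'rV[R]_n := \row_(i < n) lucas_bal R (k.+2 - i).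

Lemma lucas_row_inord j : (j < n)%N -> lucas_row 0 (inord j) = lucas_bal R (k.+2 - j).
Proof. by move=> lt_j_n; rewrite mxE inordK. Qed.

Lemma sum_lucas_row : \sum_(i < n) lucas_row 0 i = \sum_(l < n) lucas_bal R l.
Proof.
rewrite (reindex_inj rev_ord_inj) /=; apply: eq_bigr => i _.
by rewrite mxE /=; congr (lucas_bal R _); have := ltn_ord i; lia.
Qed.

Lemma lucas_row_mulmx_Qmat : lucas_row *m Qmat = 0.
Proof.
apply/rowP => j; rewrite [RHS]mxE -(inord_val j); have := ltn_ord j.
have [-> _ | j_gt0 lt_j_n] := posnP j.
  rewrite mulmx_Qmat_col0 sum_lucas_row lucas_bal_sum !lucas_row_inord //.
  by rewrite subn1 subnn lucas_balSS lucas_bal0 /=; ring.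
have [j_lt | j_ge] := ltnP j k.+2.
  rewrite mulmx_Qmat_col_mid ?j_gt0 ?j_lt // !lucas_row_inord; try lia.
  rewrite (_ : k.+2 - j.-1 = (k.+1 - j).+2)%N; last lia.
  by rewrite (_ : k.+2 - j = (k.+1 - j).+1)%N ?lucas_balSS; [ring | lia].
rewrite (_ : nat_of_ord j = k.+2); last lia.
rewrite mulmx_Qmat_col_last !lucas_row_inord // subnn subSnn.
by rewrite lucas_bal1 lucas_bal0 mulr1 subrr.
Qed.

Lemma mulmx_Qmat_eq0 (pi : 'rV[R]_n) :
  pi *m Qmat = 0 -> pi = pi 0 (inord k.+2) *: lucas_row.
Proof.
move=> piQ; have colQ j : (pi *m Qmat) 0 (inord j) = 0 by rewrite piQ mxE.
pose x (m : nat) : R := pi 0 (inord (k.+2 - m)).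
have x_eq := @lucas_bal_solution R k.+2 x.
apply/rowP => i; rewrite !mxE mulrC.
have -> : pi 0 i = x (k.+2 - i)%N.
  by congr (pi 0 _); apply/val_inj; have := ltn_ord i; rewrite /= inordK; lia.
rewrite x_eq ?leq_subr //.
  by rewrite -(colQ k.+2) mulmx_Qmat_col_last.
move=> m le_m2; rewrite -(colQ (k.+1 - m)%N) mulmx_Qmat_col_mid; last lia.
rewrite /x (_ : (k.+1 - m).-1 = k.+2 - m.+2)%N; last lia.
by rewrite (_ : (k.+1 - m).+1 = k.+2 - m)%N; last lia.
Qed.

End Generator.

Lemma stationary_Pmat {R : idomainType} {k} {q : R} (pi : 'rV[R]_k.+3) : q != 0 ->
  stationary (Pmat k.+3 q) pi <-> exists a, pi = a *: lucas_row R k.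
Proof.
move=> q_neq0; rewrite /stationary Pmat_affine mulmxDr mulmx1 -scalemxAr.
split=> [pi_stat | [a ->]]; last by rewrite -scalemxAl lucas_row_mulmx_Qmat !scaler0 addr0.
exists (pi 0 (inord k.+2)); apply: mulmx_Qmat_eq0; apply/eqP.
move: pi_stat; rewrite -[X in X = _]addr0 => /addrI/esym/eqP.
by rewrite scalemx_eq0 (negbTE q_neq0).
Qed.

Theorem theorem3p2 (R : realFieldType) (n : nat) (q : R)
  (hn : (3 <= n)%N) (hq0 : 0 < q) (hq1 : q <= 1 / 6%:R) (pi : 'rV[R]_n) :
  (prob_vector pi /\ stationary (Pmat n q) pi) <->
  (forall i : 'I_n,
     pi 0 i = lucas_bal R (n - 1 - i) / \sum_(l < n) lucas_bal R l).
Proof.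
case: n hn pi => [|[|[|k]]] // _ pi.
have q_neq0 : q != 0 by rewrite gt_eqF.
set T := \sum_(l < k.+3) lucas_bal R l.
have T_gt0 : 0 < T.
  rewrite /T big_ord_recl ltr_pwDl ?lucas_bal_gt0 ?sumr_ge0 // => i _.
  exact/ltW/lucas_bal_gt0.
have T_neq0 : T != 0 by rewrite gt_eqF.
have sum_scale a : \sum_(i < k.+3) (a *: lucas_row R k) 0 i = a * T.
  by under eq_bigr do rewrite mxE; rewrite -mulr_sumr sum_lucas_row.
split.
- case=> [[_ sum1] /(stationary_Pmat _ q_neq0) [a pi_eq]] i.
  move: sum1; rewrite pi_eq sum_scale => aT1.
  have -> : a = T^-1 by apply: (mulIf T_neq0); rewrite aT1 mulVf.
  by rewrite !mxE subn1 mulrC.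
- move=> pi_lucas; have pi_eq : pi = T^-1 *: lucas_row R k.
    by apply/rowP => i; rewrite pi_lucas !mxE subn1 mulrC.
  split; last by apply/(stationary_Pmat _ q_neq0); exists T^-1.
  split; last by rewrite pi_eq sum_scale mulVf.
  by move=> j; rewrite pi_eq !mxE mulr_ge0 ?invr_ge0 ?ltW ?lucas_bal_gt0.
Qed.
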